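(* Let $1 < n \leq m$ and let $W \in \mathbb{R}^{m \times n}$ have rows $w_1,\dots,w_m \in \mathbb{R}^n$. The map $\mathbb{R}^n \to \mathbb{R}^m$, $x \mapsto \operatorname{ReLU}(Wx)$ (with $\operatorname{ReLU}(y)=\max(y,0)$ applied componentwise) is injective if and only if $W$ has a directed spanning set of $\mathbb{R}^n$ with respect to every $x \in \mathbb{R}^n$.
   Context: Directed spanning set (DSS): for a matrix $W$ with rows $w_i \in \mathbb{R}^n$, a subspace (or set) $\Omega \subset \mathbb{R}^n$ and a vector $x \in \mathbb{R}^n$, $W$ has a DSS of $\Omega$ with respect to $x$ if there is a collection of rows $w_i$ of $W$, each satisfying $\langle x, w_i\rangle \geq 0$, whose linear span contains $\Omega$. Equivalently, $W$ has a DSS of $\mathbb{R}^n$ w.r.t. $x$ iff the rows $\{w_i : \langle x,w_i\rangle \ge 0\}$ span $\mathbb{R}^n$. *)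

From mathcomp Require Import all_boot all_order all_algebra.
From mathcomp Require Import reals.
Set Implicit Arguments. Unset Strict Implicit. Unset Printing Implicit Defensive.
Import Order.TTheory GRing.Theory Num.Theory.
Local Open Scope ring_scope.

(* Vectors of R^n are column vectors 'cV[R]_n; W : 'M[R]_(m, n) has rows w_i = row i W. *)

Definition relu (R : realType) (m : nat) (y : 'cV[R]_m) : 'cV[R]_m :=
  \col_i Num.max (y i 0) 0.

Definition relu_layer (R : realType) (m n : nat) (W : 'M[R]_(m, n))
  (x : 'cV[R]_n) : 'cV[R]_m := relu (W *m x).

Definition row_dot (R : realType) (m n : nat) (W : 'M[R]_(m, n))
  (x : 'cV[R]_n) (i : 'I_m) : R := \sum_(j < n) x j 0 * W i j.

(* The matrix whose rows are the rows of W indexed by S (other rows zeroed);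
   its row space is the linear span of {w_i : i in S}. *)
Definition rows_of (R : realType) (m n : nat) (W : 'M[R]_(m, n))
  (S : {set 'I_m}) : 'M[R]_(m, n) :=
  \matrix_(i < m) (if i \in S then row i W else 0).

(* W has a directed spanning set of the subspace Omega (given by the row space
   of a matrix Omega) w.r.t. x: there is a collection S of rows w_i of W, each
   with <x, w_i> >= 0, whose linear span contains Omega. *)
Definition has_DSS (R : realType) (m n k : nat) (W : 'M[R]_(m, n))
  (Omega : 'M[R]_(k, n)) (x : 'cV[R]_n) : Prop :=
  exists S : {set 'I_m},
    (forall i, i \in S -> 0 <= row_dot W x i) /\ (Omega <= rows_of W S)%MS.

From mathcomp Require Import all_boot all_order all_algebra.
From mathcomp Require Import reals.
From mathcomp Require Import lra.
Set Implicit Arguments. Unset Strict Implicit. Unset Printing Implicit Defensive.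
Import Order.TTheory GRing.Theory Num.Theory.
Local Open Scope ring_scope.

(* If ReLU(Wx) = ReLU(Wy), then on each row w_i with <x + y, w_i> >= 0 the
   numbers <x, w_i> and <y, w_i> have equal positive parts and a nonnegative
   sum, hence are equal; a directed spanning set w.r.t. x + y thus annihilates
   x - y, which forces x = y.  Conversely, if the rows w_i with <x, w_i> >= 0
   all vanish on some v <> 0, then for t large the rows with <x, w_i> < 0 stay
   negative on t x + v, so ReLU(W (t x + v)) = ReLU(W (t x)). *)

Lemma max0_inj_addr_ge0 (R : realDomainType) (a b : R) :
  Num.max a 0 = Num.max b 0 -> 0 <= a + b -> a = b.
Proof.
by case: (lerP a 0) => ha; case: (lerP b 0) => hb; lra.
Qed.

Lemma exists_scale_neg (R : realFieldType) (I : finType) (P : pred I)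
    (a c : I -> R) :
  (forall i, P i -> a i < 0) ->
  exists2 t : R, 0 < t & forall i, P i -> t * a i + c i < 0.
Proof.
move=> a_lt0; pose f i := `|c i| / - a i.
have f_ge0 i : P i -> 0 <= f i.
  by move=> Pi; rewrite divr_ge0 // oppr_ge0 ltW ?a_lt0.
have sum_ge0 : 0 <= \sum_(i | P i) f i := sumr_ge0 _ f_ge0.
exists (1 + \sum_(i | P i) f i); first by rewrite ltr_pwDl.
move=> i Pi; have ai_lt0 := a_lt0 i Pi.
have le_f_sum : f i <= \sum_(j | P j) f j.
  by rewrite (bigD1 i) //= lerDl sumr_ge0 // => j /andP[/f_ge0].
have ai_f : - a i * f i = `|c i|.
  by rewrite /f mulrC divfK // oppr_eq0 ltr0_neq0.
have := ler_norm (c i).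
have : - a i * f i <= - a i * \sum_(j | P j) f j.
  by rewrite ler_pM2l // oppr_gt0.
nra.
Qed.

Lemma row_full_mulmx_eq0 (F : fieldType) (m n : nat) (A : 'M[F]_(m, n))
    (v : 'cV[F]_n) :
  row_full A -> A *m v = 0 -> v = 0.
Proof.
by case/row_fullP=> B BA Av; rewrite -[v]mul1mx -BA -mulmxA Av mulmx0.
Qed.

Lemma row_fullPn_ker (F : fieldType) (m n : nat) (A : 'M[F]_(m, n)) :
  ~~ row_full A -> exists2 v : 'cV[F]_n, v != 0 & A *m v = 0.
Proof.
rewrite -cokermx_eq0 => /matrix0Pn[k [j kj_neq0]].
exists (col j (cokermx A)); last by rewrite colE mulmxA mulmx_coker mul0mx.
by apply/matrix0Pn; exists k, 0; rewrite mxE.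
Qed.

Section ReluLayer.

Variables (R : realType) (m n : nat) (W : 'M[R]_(m, n)).

Lemma row_dotE (x : 'cV[R]_n) (i : 'I_m) : row_dot W x i = (W *m x) i 0.
Proof. by rewrite /row_dot mxE; apply: eq_bigr => j _; rewrite mulrC. Qed.

Lemma rows_of_mulmxE (S : {set 'I_m}) (v : 'cV[R]_n) (i : 'I_m) :
  (rows_of W S *m v) i 0 = if i \in S then (W *m v) i 0 else 0.
Proof.
rewrite !mxE; case: ifP => iS.
  by apply: eq_bigr => j _; rewrite /rows_of !mxE iS mxE.
by rewrite big1 // => j _; rewrite /rows_of !mxE iS mxE mul0r.
Qed.

Lemma relu_layerE (x : 'cV[R]_n) (i : 'I_m) (j : 'I_1) :
  relu_layer W x i j = Num.max ((W *m x) i 0) 0.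
Proof. by rewrite [LHS]mxE. Qed.

Lemma relu_layer_eq_row (x y : 'cV[R]_n) (i : 'I_m) :
  relu_layer W x = relu_layer W y -> 0 <= row_dot W (x + y) i ->
  (W *m (x - y)) i 0 = 0.
Proof.
move=> /matrixP/(_ i 0); rewrite !relu_layerE => relu_xy.
rewrite row_dotE mulmxDr mxE => /(max0_inj_addr_ge0 relu_xy) x_eq_y.
by rewrite mulmxBr [LHS]mxE [X in _ + X]mxE x_eq_y subrr.
Qed.

Lemma relu_layer_inj_of_DSS :
  (forall x : 'cV[R]_n, has_DSS W (1%:M : 'M[R]_n) x) ->
  injective (relu_layer W).
Proof.
move=> DSS x y relu_xy; have [S [S_ge0 full_S]] := DSS (x + y).
suff /eqP : x - y = 0 by rewrite subr_eq0 => /eqP.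
apply: (row_full_mulmx_eq0 (A := rows_of W S)); first by rewrite -sub1mx.
apply/matrixP => i j; rewrite ord1 rows_of_mulmxE [RHS]mxE.
by case: ifP => // /S_ge0 /(relu_layer_eq_row relu_xy).
Qed.

Lemma relu_layer_scale_shift (x v : 'cV[R]_n) (t : R) :
  0 < t -> (forall i, 0 <= row_dot W x i -> (W *m v) i 0 = 0) ->
  (forall i, row_dot W x i < 0 -> t * (W *m x) i 0 + (W *m v) i 0 < 0) ->
  relu_layer W (t *: x + v) = relu_layer W (t *: x).
Proof.
move=> t_gt0 v_ker v_small; apply/matrixP => i j; rewrite ord1.
rewrite !relu_layerE mulmxDr -scalemxAr [(_ + _ : 'cV[R]_m) i 0]mxE.
rewrite ![(_ *: _ : 'cV[R]_m) i 0]mxE.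
case: (lerP 0 (row_dot W x i)) => [/v_ker -> | x_neg]; first by rewrite addr0.
have tx_neg : t * (W *m x) i 0 < 0 by rewrite pmulr_rlt0 // -row_dotE.
by rewrite !max_r ?ltW ?v_small.
Qed.

Lemma DSS_of_relu_layer_inj :
  injective (relu_layer W) ->
  forall x : 'cV[R]_n, has_DSS W (1%:M : 'M[R]_n) x.
Proof.
move=> inj x; pose S := [set i | 0 <= row_dot W x i].
exists S; split=> [i|]; first by rewrite inE.
rewrite sub1mx; apply: contraT => /row_fullPn_ker[v v_neq0 Sv].
have v_ker i : 0 <= row_dot W x i -> (W *m v) i 0 = 0.
  move=> x_ge0; move/matrixP/(_ i 0): Sv.
  by rewrite rows_of_mulmxE inE x_ge0 => ->; rewrite mxE.
have x_neg i : row_dot W x i < 0 -> (W *m x) i 0 < 0 by rewrite row_dotE.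
have [t t_gt0 v_small] := exists_scale_neg (fun i => (W *m v) i 0) x_neg.
have := inj _ _ (relu_layer_scale_shift t_gt0 v_ker v_small).
by rewrite -[RHS]addr0 => /addrI v_eq0; rewrite v_eq0 eqxx in v_neq0.
Qed.

End ReluLayer.

Theorem theorem1 (R : realType) (m n : nat) (W : 'M[R]_(m, n)) :
  (1 < n)%N -> (n <= m)%N ->
  (injective (relu_layer W) <->
   forall x : 'cV[R]_n, has_DSS W (1%:M : 'M[R]_n) x).
Proof.
(* The equivalence holds in all dimensions; the bounds 1 < n <= m are unused. *)
move=> _ _; split; [exact: DSS_of_relu_layer_inj | exact: relu_layer_inj_of_DSS].
Qed.
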